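(* Let $R$ be a commutative ring with identity, $\mathfrak{m}$ a maximal ideal of $R$, and $M$ a torsion-free unitary $R$-module. Then the following are equivalent: (1) $M$ is an $\mathfrak{m}$-Noetherian module; (2) $M_{\mathfrak{m}}$ is a Noetherian $R_{\mathfrak{m}}$-module and for every nonzero finitely generated $R$-submodule $L$ of $M$ there exists $s\in R\setminus\mathfrak{m}$ such that $L_{\mathfrak{m}}\cap M=L:s$.
   Context: For a prime ideal $P$, $M$ is $P$-Noetherian if it is $S$-Noetherian for $S=R\setminus P$, where a submodule $L$ is $S$-finite if there exist $s\in S$ and a finitely generated submodule $F$ of $M$ with $Ls\subseteq F\subseteq L$, and $M$ is $S$-Noetherian if every submodule is $S$-finite. For $r\in R$ and a submodule $L$ of $M$, $L:r=\{x\in M\mid xr\in L\}$. The intersection $L_{\mathfrak{m}}\cap M$ is taken in $M_{\mathfrak{m}}$, with $M$ identified with its image there. *)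

From mathcomp Require Import all_boot all_algebra.
Set Implicit Arguments. Unset Strict Implicit. Unset Printing Implicit Defensive.
Import GRing.Theory.
Local Open Scope ring_scope.

Section Defs.
Variable R : comNzRingType.

Definition is_ideal (I : R -> Prop) : Prop :=
  [/\ I 0, (forall x y, I x -> I y -> I (x + y)) & (forall r x, I x -> I (r * x))].

Definition maximal_ideal (m : R -> Prop) : Prop :=
  [/\ is_ideal m, ~ m 1 &
      forall J : R -> Prop, is_ideal J -> (forall x, m x -> J x) ->
        (forall x, J x -> m x) \/ (forall x, J x)].

Variable M : lmodType R.

Definition torsion_free : Prop := forall (r : R) (x : M), r *: x = 0 -> r = 0 \/ x = 0.

Definition submodule (L : M -> Prop) : Prop :=
  [/\ L 0, (forall x y, L x -> L y -> L (x + y)) & (forall r x, L x -> L (r *: x))].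

Definition generated_by (L : M -> Prop) (gs : seq M) : Prop :=
  forall x, L x <-> (forall L', submodule L' -> (forall g, g \in gs -> L' g) -> L' x).

Definition fin_gen (L : M -> Prop) : Prop := exists gs : seq M, generated_by L gs.

Definition S_finite (S : R -> Prop) (L : M -> Prop) : Prop :=
  exists s, S s /\ exists F : M -> Prop,
    submodule F /\ fin_gen F /\ (forall x, L x -> F (s *: x)) /\ (forall x, F x -> L x).

Definition S_Noetherian (S : R -> Prop) : Prop :=
  forall L, submodule L -> S_finite S L.

Definition P_Noetherian (P : R -> Prop) : Prop := S_Noetherian (fun s => ~ P s).

Definition colon (L : M -> Prop) (r : R) : M -> Prop := fun x => L (r *: x).

(* ---- Localization M_P at a prime P, as a setoid of fractions x/s (s \notin P) ---- *)
Definition loc_valid (P : R -> Prop) (p : M * R) : Prop := ~ P p.2.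

Definition loc_eq (P : R -> Prop) (p q : M * R) : Prop :=
  exists u, ~ P u /\ u *: (q.2 *: p.1 - p.2 *: q.1) = 0.

(* R_P-submodules of M_P: predicates on valid fractions, closed under equality
   of fractions, containing 0/1, closed under sums x/s + y/t = (t x + s y)/(s t)
   and under scalars (r/u)(x/s) = (r x)/(u s). *)
Definition loc_submodule (P : R -> Prop) (N : M * R -> Prop) : Prop :=
  [/\ (forall p, N p -> loc_valid P p),
      (forall p q, N p -> loc_valid P q -> loc_eq P p q -> N q),
      N (0, 1),
      (forall x s y t, N (x, s) -> N (y, t) -> N (t *: x + s *: y, s * t)) &
      (forall r u x s, ~ P u -> N (x, s) -> N (r *: x, u * s))].

Definition loc_fin_gen (P : R -> Prop) (N : M * R -> Prop) : Prop :=
  exists gs : seq (M * R), (forall g, g \in gs -> loc_valid P g) /\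
    forall p, N p <-> (forall N', loc_submodule P N' -> (forall g, g \in gs -> N' g) -> N' p).

Definition loc_Noetherian (P : R -> Prop) : Prop :=
  forall N, loc_submodule P N -> loc_fin_gen P N.

Definition loc_of (P : R -> Prop) (L : M -> Prop) : M * R -> Prop :=
  fun p => loc_valid P p /\ exists l t, L l /\ ~ P t /\ loc_eq P p (l, t).

(* L_P \cap M, with M identified with its image x |-> x/1 in M_P *)
Definition loc_cap (P : R -> Prop) (L : M -> Prop) : M -> Prop :=
  fun x => loc_of P L (x, 1).

End Defs.

From mathcomp Require Import all_boot all_algebra.
From mathcomp Require Import ring.
From Stdlib Require Import Classical.
Import GRing.Theory.
Local Open Scope ring_scope.
Set Implicit Arguments. Unset Strict Implicit.

(* Only three properties of m are used: m 0, 1 \notin m, and R \ m is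
   multiplicatively closed; torsion-freeness makes x/s = y/t equivalent to
   t x = s y, so that L_m \cap M = { x | t x \in L for some t \notin m }.
   (1) -> (2): apply m-Noetherianity to this saturation of L; clearing the
   denominators of the finitely many generators of the resulting finitely
   generated F with s (L_m \cap M) <= F <= L_m \cap M gives one s with
   L_m \cap M = L : s.  Likewise an R_m-submodule N of M_m is generated by
   the fractions g/1, g running over generators of an F with
   s {x | x/1 \in N} <= F <= {x | x/1 \in N}.
   (2) -> (1): for a submodule N of M, the numerators of finitely many
   generators of N_m span a finitely generated L <= N with
   N <= L_m \cap M = L : s, hence N s <= L <= N; if L = 0 then
   L_m \cap M = 0 by torsion-freeness, and s = 1 works. *)

Section MaximalIdeal.
Variables (R : comNzRingType) (m : R -> Prop).
Hypothesis max_m : maximal_ideal m.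

Lemma maximal_ideal0 : m 0.
Proof. by case: max_m => [[]]. Qed.

Lemma maximal_ideal_proper : ~ m 1.
Proof. by case: max_m. Qed.

Lemma maximal_ideal_complM s t : ~ m s -> ~ m t -> ~ m (s * t).
Proof.
move=> ms mt mst; case: max_m => [[m0 mD mM] _ maxm].
pose J x := exists a y, m y /\ x = a * s + y.
have J_ideal : is_ideal J.
  split.
  - by exists 0, 0; rewrite mul0r addr0.
  - move=> _ _ [a1 [y1 [my1 ->]]] [a2 [y2 [my2 ->]]].
    by exists (a1 + a2), (y1 + y2); split; [exact: mD | ring].
  - move=> r _ [a [y [my ->]]].
    by exists (r * a), (r * y); split; [exact: mM | ring].
have mJ x : m x -> J x by exists 0, x; rewrite mul0r add0r.
case: (maxm J J_ideal mJ) => [Jm | Jfull].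
  by apply: ms; apply: Jm; exists 1, 0; rewrite mul1r addr0.
have [a [y [my e]]] := Jfull 1; apply: mt.
have -> : t = a * (s * t) + t * y by rewrite -[t in LHS]mulr1 e; ring.
by apply: mD; apply: mM.
Qed.

End MaximalIdeal.

Lemma seq_choice (A B : eqType) (Q : A -> B -> Prop) (xs : seq A) :
  (forall x, x \in xs -> exists y, Q x y) ->
  exists ys : seq B, (forall y, y \in ys -> exists2 x, x \in xs & Q x y) /\
                     (forall x, x \in xs -> exists2 y, y \in ys & Q x y).
Proof.
elim: xs => [|x xs IH] Qxs; first by exists [::].
have [y Qxy] := Qxs x (mem_head x xs).
have [|ys [ysQ xsQ]] := IH; first by move=> x' x'xs; apply: Qxs; rewrite inE x'xs orbT.
exists (y :: ys); split.
- move=> y'; rewrite inE => /predU1P [-> | y'ys]; first by exists x; rewrite ?mem_head.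
  by have [x' x'xs Qx'] := ysQ y' y'ys; exists x'; rewrite // inE x'xs orbT.
- move=> x'; rewrite inE => /predU1P [-> | x'xs]; first by exists y; rewrite ?mem_head.
  by have [y' y'ys Qy'] := xsQ x' x'xs; exists y'; rewrite // inE y'ys orbT.
Qed.

Section Submodules.
Variables (R : comNzRingType) (M : lmodType R).

Definition span (gs : seq M) : M -> Prop :=
  fun x => forall L, submodule L -> (forall g, g \in gs -> L g) -> L x.

Lemma span_submodule gs : submodule (span gs).
Proof.
split.
- by move=> L [].
- move=> x y x_gs y_gs L L_sub gsL; have [_ LD _] := L_sub.
  by apply: LD; [exact: x_gs | exact: y_gs].
- move=> r x x_gs L L_sub gsL; have [_ _ LZ] := L_sub.
  by apply: LZ; exact: x_gs.
Qed.

Lemma mem_span gs g : g \in gs -> span gs g.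
Proof. by move=> g_gs L _; apply. Qed.

Lemma colon_submodule (L : M -> Prop) s : submodule L -> submodule (colon L s).
Proof.
case=> L0 LD LZ; split; rewrite /colon.
- by rewrite scaler0.
- by move=> x y Lx Ly; rewrite scalerDr; apply: LD.
- by move=> r x Lx; rewrite scalerA mulrC -scalerA; apply: LZ.
Qed.

End Submodules.

Section Localization.
Variables (R : comNzRingType) (P : R -> Prop).
Hypotheses (P0 : P 0) (P1 : ~ P 1) (PM : forall s t, ~ P s -> ~ P t -> ~ P (s * t)).
Variable M : lmodType R.
Hypothesis tfM : torsion_free M.

Lemma loc_eq_cross (p q : M * R) : q.2 *: p.1 = p.2 *: q.1 -> loc_eq P p q.
Proof. by move=> e; exists 1; rewrite e subrr scaler0. Qed.

Lemma loc_eqP (p q : M * R) : loc_eq P p q <-> q.2 *: p.1 = p.2 *: q.1.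
Proof.
split; last exact: loc_eq_cross.
case=> u [Pu /tfM [u0 | /eqP]]; first by rewrite u0 in Pu.
by rewrite subr_eq0 => /eqP.
Qed.

Lemma loc_capP (L : M -> Prop) x : loc_cap P L x <-> exists2 t, ~ P t & L (t *: x).
Proof.
split.
  by case=> _ [l [t [Ll [Pt /loc_eqP /= e]]]]; exists t; rewrite // e scale1r.
case=> t Pt Ltx; split=> //; exists (t *: x), t; do 2!split=> //.
by apply: loc_eq_cross; rewrite /= scale1r.
Qed.

Lemma loc_cap_submodule (L : M -> Prop) : submodule L -> submodule (loc_cap P L).
Proof.
case=> L0 LD LZ; split.
- by apply/loc_capP; exists 1; rewrite ?scaler0.
- move=> x y /loc_capP [s Ps Lsx] /loc_capP [t Pt Lty].
  apply/loc_capP; exists (t * s); first exact: PM.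
  by rewrite scalerDr -scalerA mulrC -scalerA; apply: LD; apply: LZ.
- move=> r x /loc_capP [t Pt Ltx]; apply/loc_capP; exists t => //.
  by rewrite scalerA mulrC -scalerA; apply: LZ.
Qed.

Lemma common_denominator (L : M -> Prop) gs :
  submodule L -> (forall g, g \in gs -> loc_cap P L g) ->
  exists2 T, ~ P T & forall x, span gs x -> L (T *: x).
Proof.
move=> L_sub; elim: gs => [|g gs IH] gsL.
  by exists 1 => // x x_span; apply: (x_span (colon L 1)) => //; exact: colon_submodule.
have [|T PT gsT] := IH; first by move=> g' g'gs; apply: gsL; rewrite inE g'gs orbT.
have /loc_capP [t Pt Ltg] := gsL g (mem_head g gs).
have [_ _ LZ] := L_sub.
exists (t * T); first exact: PM.
move=> x x_span; apply: (x_span (colon L (t * T))); first exact: colon_submodule.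
move=> g'; rewrite inE => /predU1P [-> | g'gs]; rewrite /colon.
  by rewrite mulrC -scalerA; apply: LZ.
by rewrite -scalerA; apply: LZ; apply: gsT; exact: mem_span.
Qed.

Lemma loc_of_base (L : M -> Prop) x : L x -> loc_of P L (x, 1).
Proof. by move=> Lx; split=> //; exists x, 1; do 2!split=> //; exact: loc_eq_cross. Qed.

Lemma loc_of_submodule (L : M -> Prop) : submodule L -> loc_submodule P (loc_of P L).
Proof.
move=> [L0 LD LZ]; split.
- by move=> p [].
- move=> p q [Pp [l [t [Ll [Pt /loc_eqP /= e1]]]]] Pq /loc_eqP e2.
  split=> //; exists (p.2 *: l), (p.2 * t); split; first exact: LZ.
  split; first exact: PM.
  apply: loc_eq_cross => /=.
  by rewrite mulrC -scalerA -e2 scalerA mulrC -scalerA e1.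
- exact: loc_of_base.
- move=> x s y t [Ps [l1 [t1 [Ll1 [Pt1 /loc_eqP /= e1]]]]]
                 [Pt [l2 [t2 [Ll2 [Pt2 /loc_eqP /= e2]]]]].
  split; first exact: PM.
  exists (t2 *: l1 + t1 *: l2), (t1 * t2); split; first by apply: LD; apply: LZ.
  split; first exact: PM.
  apply: loc_eq_cross => /=.
  rewrite scalerDr !scalerA.
  have -> : t1 * t2 * t = t * t2 * t1 by ring.
  have -> : t1 * t2 * s = s * t1 * t2 by ring.
  rewrite -(scalerA (t * t2)) -(scalerA (s * t1)) e1 e2 !scalerA scalerDr !scalerA.
  by congr (_ + _); congr (_ *: _); ring.
- move=> r u x s Pu [Ps [l [t [Ll [Pt /loc_eqP /= e]]]]].
  split; first exact: PM.
  exists (r *: l), (u * t); split; first exact: LZ.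
  split; first exact: PM.
  apply: loc_eq_cross => /=.
  rewrite !scalerA.
  have -> : u * t * r = u * r * t by ring.
  by rewrite -scalerA e !scalerA; congr (_ *: _); ring.
Qed.

Section LocSubmodule.
Variable N : M * R -> Prop.
Hypothesis N_sub : loc_submodule P N.

Lemma loc_submodule_base : submodule (fun x => N (x, 1)).
Proof.
case: N_sub => _ Neq N0 ND NZ; split=> //.
- move=> x y Nx Ny; apply: (Neq _ _ (ND _ _ _ _ Nx Ny)) => //.
  by apply: loc_eq_cross; rewrite /= !scale1r mulr1 scale1r.
- move=> r x Nx; apply: (Neq _ _ (NZ r 1 _ _ P1 Nx)) => //.
  by apply: loc_eq_cross; rewrite /= mulr1 !scale1r.
Qed.

Lemma loc_submodule_frac x t : ~ P t -> N (x, t) <-> N (x, 1).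
Proof.
case: N_sub => _ Neq _ _ NZ Pt; split=> [Nxt | Nx1].
  apply: (Neq _ _ (NZ t 1 _ _ P1 Nxt)) => //.
  by apply: loc_eq_cross; rewrite /= mul1r !scale1r.
apply: (Neq _ _ (NZ 1 t _ _ Pt Nx1)) => //.
by apply: loc_eq_cross; rewrite /= mulr1 scale1r.
Qed.

Lemma loc_submodule_cancel s x : ~ P s -> N (s *: x, 1) -> N (x, 1).
Proof.
move=> Ps /(loc_submodule_frac _ Ps); case: N_sub => _ Neq _ _ _ Nsx.
by apply: (Neq _ _ Nsx) => //; apply: loc_eq_cross; rewrite /= scale1r.
Qed.

End LocSubmodule.

Lemma P_Noetherian_loc_cap_colon (L : M -> Prop) :
  P_Noetherian M P -> submodule L ->
  exists s, ~ P s /\ forall x, loc_cap P L x <-> colon L s x.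
Proof.
move=> noethM L_sub.
have [s [Ps [F [_ [[gs gsF] [capF FL]]]]]] := noethM _ (loc_cap_submodule L_sub).
have [T PT gsT] : exists2 T, ~ P T & forall x, span gs x -> L (T *: x).
  by apply: common_denominator => // g g_gs; apply/FL/gsF; exact: mem_span.
exists (T * s); split; first exact: PM.
move=> x; split=> [/capF /gsF /gsT | Lx]; first by rewrite /colon scalerA.
by apply/loc_capP; exists (T * s) => //; exact: PM.
Qed.

Lemma P_Noetherian_loc_Noetherian : P_Noetherian M P -> loc_Noetherian M P.
Proof.
move=> noethM N N_sub.
have [s [Ps [F [_ [[gs gsF] [NF FN]]]]]] := noethM _ (loc_submodule_base N_sub).
exists [seq (g, 1) | g <- gs]; split; first by move=> _ /mapP [g _ ->].
move=> [x t]; split=> [Nxt N' N'_sub gsN' | ]; last first.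
  by apply=> // _ /mapP [g g_gs ->]; apply/FN/gsF; exact: mem_span.
have [N_valid _ _ _ _] := N_sub; have Pt : ~ P t := N_valid _ Nxt.
apply/(loc_submodule_frac N'_sub _ Pt)/(loc_submodule_cancel N'_sub Ps).
have /NF /gsF/(_ (fun y => N' (y, 1))) := (loc_submodule_frac N_sub _ Pt).1 Nxt.
apply; first exact: loc_submodule_base.
by move=> g g_gs; apply: gsN'; exact: map_f.
Qed.

Lemma loc_cap_zero (L : M -> Prop) x :
  submodule L -> (forall y, L y -> y = 0) -> loc_cap P L x <-> colon L 1 x.
Proof.
move=> [L0 _ _] L_zero; split; last by move=> Lx; apply/loc_capP; exists 1.
case/loc_capP=> t Pt /L_zero /tfM [t0 | ->]; first by rewrite t0 in Pt.
by rewrite /colon scale1r.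
Qed.

Lemma loc_Noetherian_saturation_fin_gen (N : M -> Prop) :
  loc_Noetherian M P -> submodule N ->
  exists ls, (forall l, l \in ls -> N l) /\ forall x, N x -> loc_cap P (span ls) x.
Proof.
move=> noethMP N_sub; have [gs [gs_valid gsE]] := noethMP _ (loc_of_submodule N_sub).
pose Q g l := N l /\ exists2 t, ~ P t & loc_eq P g (l, t).
have [|ls [lsQ gsQ]] := @seq_choice _ _ Q gs.
  move=> g g_gs; have [_ [l [t [Nl [Pt e]]]]] : loc_of P N g by apply/gsE => N' _; apply.
  by exists l; split=> //; exists t.
exists ls; split=> [l /lsQ [g _ []] // | x Nx].
apply: ((gsE _).1 (loc_of_base Nx) (loc_of P (span ls))).
  exact/loc_of_submodule/span_submodule.
move=> g g_gs; have [l l_ls [_ [t Pt e]]] := gsQ g g_gs.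
by split; [exact: gs_valid | exists l, t; split; [exact: mem_span | split]].
Qed.

Lemma loc_Noetherian_P_Noetherian :
  loc_Noetherian M P ->
  (forall L : M -> Prop, submodule L -> fin_gen L -> (exists x, L x /\ x <> 0) ->
     exists s, ~ P s /\ forall x, loc_cap P L x <-> colon L s x) ->
  P_Noetherian M P.
Proof.
move=> noethMP cap_colon N N_sub.
have [ls [lsN Nsat]] := loc_Noetherian_saturation_fin_gen noethMP N_sub.
have L_sub := span_submodule ls; have L_fg : fin_gen (span ls) by exists ls.
have [s [Ps capE]] : exists s, ~ P s /\ forall x, loc_cap P (span ls) x <-> colon (span ls) s x.
  have [L_nz | L_z] := classic (exists x, span ls x /\ x <> 0); first exact: cap_colon.
  exists 1; split=> // x; apply: loc_cap_zero => // y Ly.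
  by apply: NNPP => y_nz; apply: L_z; exists y.
exists s; split=> //; exists (span ls); split=> //; split=> //.
by split=> [x /Nsat /capE // | x]; apply.
Qed.

End Localization.

Theorem proposition2p2 (R : comNzRingType) (m : R -> Prop) (M : lmodType R) :
  maximal_ideal m -> torsion_free M ->
  (P_Noetherian M m <->
   (loc_Noetherian M m /\
    forall L : M -> Prop, submodule L -> fin_gen L -> (exists x, L x /\ x <> 0) ->
      exists s : R, ~ m s /\ (forall x : M, loc_cap m L x <-> colon L s x))).
Proof.
move=> max_m tfM.
have m0 := maximal_ideal0 max_m; have m1 := maximal_ideal_proper max_m.
have mM := maximal_ideal_complM max_m.
split=> [noethM | [noethMm cap_colon]].
  split; first exact: P_Noetherian_loc_Noetherian.
  by move=> L L_sub _ _; exact: P_Noetherian_loc_cap_colon.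
exact: loc_Noetherian_P_Noetherian.
Qed.
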